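(* Let $Q=\langle A_k,s_i:k<n,i<m\rangle$ (with $n$ minimal). Then there is an $\mathscr{L}_{\omega\omega}(Q)$-formula $\chi(x,y)$, with $x,y$ $d$-tuples of variables, such that for all $a,b\in\mathbb{N}^d$: $\mathbb{N}\models\chi(a,b)$ if and only if $a,b\in A_k$ for some $k<n$.
   Context: For $A\subseteq\mathbb{N}^d$ let $Q_A=\{X\subseteq\mathbb{N}^d:A\subseteq X\}$, $Q_A^{1}=Q_A$ and $Q_A^{-1}$ the complement of $Q_A$ in the power set of $\mathbb{N}^d$. The notation $Q=\langle A_k,s_i:k<n,i<m\rangle$ means: $\langle A_k:k<n\rangle$ is a partition of $\mathbb{N}^d$ for some $d<\omega$, $s_i\in\{1,-1\}^n$ for $i<m$, $Q=\bigcup_{i<m}\bigcap_{k<n}Q_{A_k}^{s_i(k)}$, and $n$ is minimal among all such representations of $Q$. $Q$ is a quantifier of type $\langle d\rangle$ on $\mathbb{N}$. $\mathscr{L}_{\omega\omega}(Q)$ is first-order logic extended by formulas $Qx\,\varphi(x,y)$ ($x$ a $d$-tuple of variables) with $\mathbb{N}\models Qx\,\varphi(x,b)$ iff $\{a\in\mathbb{N}^d:\mathbb{N}\models\varphi(a,b)\}\in Q$; formulas have no non-logical symbols besides $Q$. *)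

From mathcomp Require Import all_boot.
Set Implicit Arguments. Unset Strict Implicit. Unset Printing Implicit Defensive.

Definition point (d : nat) := 'I_d -> nat.
Definition pset (d : nat) := point d -> Prop.
Definition quant (d : nat) := pset d -> Prop.

(* Q_A = {X | A ⊆ X};  Q_A^1 = Q_A, Q_A^{-1} = complement. Sign 1 ~ true, -1 ~ false. *)
Definition QA d (A : pset d) : quant d := fun X => forall x, A x -> X x.
Definition QAs d (A : pset d) (s : bool) : quant d :=
  fun X => if s then QA A X else ~ QA A X.

Definition is_partition d n (A : 'I_n -> pset d) : Prop :=
  (forall k, exists x, A k x) /\
  (forall x, exists k, A k x) /\
  (forall x k l, A k x -> A l x -> k = l).

Definition represents d n (A : 'I_n -> pset d) m (s : 'I_m -> 'I_n -> bool)
    (Q : quant d) : Prop :=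
  is_partition A /\ forall X, Q X <-> exists i, forall k, QAs (A k) (s i k) X.

Definition presentation d n (A : 'I_n -> pset d) m (s : 'I_m -> 'I_n -> bool)
    (Q : quant d) : Prop :=
  represents A s Q /\
  forall n' (A' : 'I_n' -> pset d) m' (s' : 'I_m' -> 'I_n' -> bool),
    represents A' s' Q -> n <= n'.

Inductive form (d : nat) : Type :=
| FEq  : nat -> nat -> form d
| FNot : form d -> form d
| FAnd : form d -> form d -> form d
| FEx  : nat -> form d -> form d
| FQ   : (point d) -> form d -> form d.  (* Q x φ, x = (x_0..x_{d-1}) variable indices *)

Definition tuple_inj d (xs : point d) : bool :=
  [forall i : 'I_d, forall j : 'I_d, (xs i == xs j) ==> (i == j)].

Definition upd d (e : nat -> nat) (xs : point d) (a : point d) : nat -> nat :=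
  fun v => match [pick i | xs i == v] with Some i => a i | None => e v end.

Definition upd1 (e : nat -> nat) (x a : nat) : nat -> nat :=
  fun v => if v == x then a else e v.

(* Satisfaction in the structure N (pure equality + Q). A Q-quantifier block
   is only meaningful for pairwise distinct variables; otherwise it is false. *)
Fixpoint sat d (Q : quant d) (e : nat -> nat) (f : form d) : Prop :=
  match f with
  | FEq u v => e u = e v
  | FNot g => ~ sat Q e g
  | FAnd g h => sat Q e g /\ sat Q e h
  | FEx x g => exists a : nat, sat Q (upd1 e x a) g
  | FQ xs g => tuple_inj xs /\ Q (fun a => sat Q (upd e xs a) g)
  end.

Fixpoint fv d (f : form d) (v : nat) : bool :=
  match f with
  | FEq u w => (v == u) || (v == w)
  | FNot g => fv g v
  | FAnd g h => fv g v || fv h v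
  | FEx x g => (v != x) && fv g v
  | FQ xs g => fv g v && ~~ [exists i, xs i == v]
  end.

From mathcomp Require Import all_boot boolp.
Set Implicit Arguments. Unset Strict Implicit. Unset Printing Implicit Defensive.

(* Membership of X in Q depends only on the pattern k |-> [A_k ⊆ X]. The
   formula χ(x, y) says: for all c_0, ..., c_{n-1}, Q holds of the complement of
   {x, c_0, ..., c_{n-1}} iff it holds of the complement of {y, c_0, ..., c_{n-1}}.
   If x and y lie in the same block, both sets have the same pattern. If x ∈ A_k
   and y ∈ A_l with k ≠ l, letting the c_j hit prescribed blocks shows that Q does
   not separate patterns that agree outside {k, l} and have the same value of
   p_k ∧ p_l; so merging A_k and A_l gives a representation of Q with n - 1
   blocks, against the minimality of n. *)

Lemma QAsE d (B : pset d) (b : bool) X : QAs B b X <-> (b <-> QA B X).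
Proof.
rewrite /QAs; case: b; split.
- by split.
- by case=> H _; apply: H.
- by move=> H; split=> // /H.
- by case=> _ H /H.
Qed.

Definition blocks d n (A : 'I_n -> pset d) (p : 'I_n -> bool) : pset d :=
  fun x => exists2 k, p k & A k x.

Definition pattern d n (A : 'I_n -> pset d) (X : pset d) (k : 'I_n) : bool :=
  `[< QA (A k) X >].

Definition avoiding d r (a : point d) (c : 'I_r -> point d) : pset d :=
  fun w => ~ (w = a \/ exists j, w = c j).

Lemma QA_avoiding d r (B : pset d) a (c : 'I_r -> point d) :
  QA B (avoiding a c) <-> ~ (B a \/ exists j, B (c j)).
Proof.
split=> [H [Ba | [j Bc]] | H x Bx [Ex | [j Ex]]]; apply: H.
- exact: Ba.
- by left.
- exact: Bc.
- by right; exists j.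
- by left; rewrite -Ex.
- by right; exists j; rewrite -Ex.
Qed.

Section Representation.
Variables (d n m : nat) (A : 'I_n -> pset d) (s : 'I_m -> 'I_n -> bool).
Variable Q : quant d.
Hypothesis HQ : represents A s Q.

Let blocks_nonempty k : exists x, A k x. Proof. exact: HQ.1.1 k. Qed.
Let blocks_disjoint x k l : A k x -> A l x -> k = l. Proof. exact: HQ.1.2.2. Qed.

Lemma representsE X : Q X <-> exists i, s i =1 pattern A X.
Proof.
rewrite HQ.2; split=> -[i Hi]; exists i => k; move: (Hi k); rewrite QAsE.
- by move=> E; apply/idP/asboolP => /E.
- by move=> E; split=> [/[!E]/asboolP | /asboolP/[!E]].
Qed.

Lemma Q_pattern X Y : pattern A X =1 pattern A Y -> Q X -> Q Y.
Proof.
by move=> E /representsE [i Hi]; apply/representsE; exists i => k; rewrite Hi E.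
Qed.

Lemma eq_Q X Y : (forall w, X w <-> Y w) -> Q X <-> Q Y.
Proof.
move=> E; suff EXY : pattern A X =1 pattern A Y.
  by split; apply: Q_pattern => // k; rewrite EXY.
by move=> k; apply/asboolP/asboolP => H x /H /E.
Qed.

Lemma pattern_blocks p : pattern A (blocks A p) =1 p.
Proof.
move=> k; apply/asboolP/idP => [H | pk x Ax]; last by exists k.
by have [x /[dup] Ax /H [l pl /(blocks_disjoint Ax) ->]] := blocks_nonempty k.
Qed.

Lemma Q_blocks_pattern X : Q X <-> Q (blocks A (pattern A X)).
Proof. by split; apply: Q_pattern => k; rewrite pattern_blocks. Qed.

Lemma Q_blocks i : Q (blocks A (s i)).
Proof. by apply/representsE; exists i => k; rewrite pattern_blocks. Qed.

Lemma eq_Q_blocks p q : p =1 q -> Q (blocks A p) <-> Q (blocks A q).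
Proof. by move=> E; split; apply: Q_pattern => k; rewrite !pattern_blocks E. Qed.

Lemma exists_hitting (u : 'I_n -> bool) k0 :
  u k0 -> exists c : 'I_n -> point d, forall k, (exists j, A k (c j)) <-> u k.
Proof.
move=> uk0; have [rep Hrep] := fin_all_exists blocks_nonempty.
exists (fun j => rep (if u j then j else k0)) => k; split=> [[j] | uk].
  by case: ifP => [uj | _] /(blocks_disjoint (Hrep _)) <-.
by exists k; rewrite uk.
Qed.

Lemma Q_avoiding k a (c : 'I_n -> point d) (u : 'I_n -> bool) :
  A k a -> (forall l, (exists j, A l (c j)) <-> u l) ->
  Q (avoiding a c) <-> Q (blocks A (fun l => ~~ ((l == k) || u l))).
Proof.
move=> Ak Hc; rewrite Q_blocks_pattern; apply: eq_Q_blocks => l.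
have Al : A l a <-> l == k by split=> [/(blocks_disjoint Ak) -> | /eqP ->].
apply/asboolP/negP; rewrite QA_avoiding Al => H.
- by case/orP => [lk | /Hc ul]; apply: H; [left | right].
- by case=> [lk | /Hc ul]; apply: H; apply/orP; [left | right].
Qed.

Lemma Q_avoiding_same_block r k a b (c : 'I_r -> point d) :
  A k a -> A k b -> Q (avoiding a c) <-> Q (avoiding b c).
Proof.
move=> Aa Ab; suff E l : A l a <-> A l b.
  by split; apply: Q_pattern => l; apply/asboolP/asboolP; rewrite !QA_avoiding E.
by split=> [/(blocks_disjoint Aa) <- | /(blocks_disjoint Ab) <-].
Qed.

End Representation.

Section Coarsening.
Variables (d n n' : nat) (A : 'I_n -> pset d) (f : 'I_n -> 'I_n').
Hypothesis f_surj : forall j, exists k, f k = j.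

Definition coarsen (j : 'I_n') : pset d := fun x => exists2 k, f k = j & A k x.

Definition coarse (p : 'I_n -> bool) (j : 'I_n') : bool := [forall k, (f k == j) ==> p k].

Lemma eq_coarse p q : p =1 q -> coarse p =1 coarse q.
Proof. by move=> E j; apply: eq_forallb => k; rewrite E. Qed.

Lemma coarsen_partition : is_partition A -> is_partition coarsen.
Proof.
case=> [nonempty [cover disjoint]]; split; [|split].
- by move=> j; have [k <-] := f_surj j; have [x Ax] := nonempty k; exists x, k.
- by move=> x; have [k Ax] := cover x; exists (f k), k.
- by move=> x _ _ [k <- Akx] [l <- /(disjoint _ _ _ Akx) ->].
Qed.

Lemma QA_coarsen j X : QA (coarsen j) X <-> forall k, f k = j -> QA (A k) X.
Proof.
split=> [H k fk x Ax | H x [k /H]]; last exact.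
by apply: H; exists k.
Qed.

Lemma represents_coarsen m (s : 'I_m -> 'I_n -> bool) Q :
  represents A s Q ->
  (forall p q, coarse p =1 coarse q -> Q (blocks A p) -> Q (blocks A q)) ->
  represents coarsen (fun i => coarse (s i)) Q.
Proof.
move=> HQ Hcoarse; split; first exact: coarsen_partition HQ.1.
have patternE X j : (forall k, f k = j -> QA (A k) X) <-> coarse (pattern A X) j.
  split=> [H | /forall_inP H k /eqP /H /asboolP //].
  by apply/forall_inP => k /eqP /H /asboolP.
move=> X; rewrite (representsE HQ); split=> [[i Hi] | [i Hi]].
  by exists i => j; rewrite QAsE QA_coarsen patternE (eq_coarse Hi).
rewrite -(representsE HQ) (Q_blocks_pattern HQ); apply: Hcoarse (Q_blocks HQ i) => j.
by have := Hi j; rewrite QAsE QA_coarsen patternE => -[H1 H2]; apply/idP/idP.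
Qed.

End Coarsening.

Section MergeMap.
Variables (n : nat) (l : 'I_n) (j0 : 'I_n.-1).

(* Identifies l with k := lift l j0 and renumbers the other indices. *)
Definition merge_map (x : 'I_n) : 'I_n.-1 := odflt j0 (unlift l x).

Lemma merge_map_surj j : exists x, merge_map x = j.
Proof. by exists (lift l j); rewrite /merge_map liftK. Qed.

Lemma merge_mapE x y :
  (merge_map x == merge_map y) =
  (x == y) || (x \in [:: lift l j0; l]) && (y \in [:: lift l j0; l]).
Proof.
rewrite /merge_map !inE.
have lift_neq i : (lift l i == l) = false by rewrite eq_sym (negbTE (neq_lift _ _)).
case: unliftP => [i -> | ->]; case: unliftP => [i' -> | ->] /=;
  rewrite ?(inj_eq (@lift_inj _ l)) ?lift_neq ?eqxx ?orbT ?orbF ?andbT //=.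
- have [// | ne] := eqVneq i i'; have [Ei | //] := eqVneq i j0.
  by rewrite -Ei eq_sym (negbTE ne).
- by rewrite [l == _]eq_sym lift_neq eq_sym.
Qed.

Lemma coarse_merge_map p x :
  coarse merge_map p (merge_map x) =
  if x \in [:: lift l j0; l] then p (lift l j0) && p l else p x.
Proof.
rewrite /coarse; under eq_forallb do rewrite merge_mapE; case: ifP => Kx.
- under eq_forallb => y do rewrite andbT.
  apply/forall_inP/andP => [H | [pk pl] y]; first by split; apply: H; rewrite !inE eqxx !orbT.
  by move=> /orP [/eqP -> | ]; [move: Kx | ]; rewrite !inE => /orP [] /eqP ->.
- under eq_forallb => y do rewrite andbF orbF.
  apply/forall_inP/idP => [-> // | px y /eqP -> //].
Qed.

End MergeMap.

Section Twins.
Variables (d n m : nat) (A : 'I_n -> pset d) (s : 'I_m -> 'I_n -> bool).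
Variable Q : quant d.
Hypothesis HQ : represents A s Q.
Variables (k l : 'I_n) (a b : point d).
Hypotheses (kl : k != l) (Aa : A k a) (Ab : A l b).
Hypothesis twins : forall c : 'I_n -> point d, Q (avoiding a c) <-> Q (avoiding b c).

Lemma Q_blocks_exchange (u : 'I_n -> bool) : (exists k0, u k0) ->
  Q (blocks A (fun j => ~~ ((j == k) || u j))) <-> Q (blocks A (fun j => ~~ ((j == l) || u j))).
Proof.
case=> k0 /(exists_hitting HQ) [c Hc].
by rewrite -(Q_avoiding HQ Aa Hc) -(Q_avoiding HQ Ab Hc).
Qed.

Definition set2 (p : 'I_n -> bool) (x y : bool) (j : 'I_n) : bool :=
  if j == k then x else if j == l then y else p j.

Lemma Q_blocks_set2 p x y :
  Q (blocks A (set2 p x y)) <-> Q (blocks A (set2 p (x && y) (x && y))).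
Proof.
have lk : (l == k) = false by rewrite eq_sym (negbTE kl).
have eq_off_kl (f g : 'I_n -> bool) : f k = g k -> f l = g l ->
    (forall j, j != k -> j != l -> f j = g j) -> f =1 g.
  move=> Ek El E j; have [-> // | jk] := eqVneq j k; have [-> // | jl] := eqVneq j l.
  exact: E.
have exchange e : e \in [:: k; l] ->
    Q (blocks A (set2 p false (e != l))) <-> Q (blocks A (set2 p (e != k) false)).
  (* Parameters hitting e and the blocks outside {k, l} omitted by p. *)
  move=> Ke; pose u j := (j == e) || (j != k) && (j != l) && ~~ p j.
  have off j : j != k -> j != l -> ~~ ((j == k) || u j) = p j /\ ~~ ((j == l) || u j) = p j.
    move=> jk jl; have /negbTE je : j != e by apply: contraTneq Ke => <-; rewrite !inE negb_or jk.
    by rewrite /u je (negbTE jk) (negbTE jl) /= negbK.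
  rewrite (eq_Q_blocks HQ (_ : set2 p false (e != l) =1 fun j => ~~ ((j == k) || u j)));
    last first.
    apply: eq_off_kl => [|| j jk jl]; rewrite /set2 ?eqxx ?lk.
    - by [].
    - by rewrite /u eqxx andbF orbF eq_sym.
    - by rewrite (off j jk jl).1 (negbTE jk) (negbTE jl).
  rewrite (eq_Q_blocks HQ (_ : set2 p (e != k) false =1 fun j => ~~ ((j == l) || u j)));
    last first.
    apply: eq_off_kl => [|| j jk jl]; rewrite /set2 ?eqxx ?lk.
    - by rewrite /u (negbTE kl) eqxx /= orbF eq_sym.
    - by [].
    - by rewrite (off j jk jl).2 (negbTE jk) (negbTE jl).
  by apply: Q_blocks_exchange; exists e; rewrite /u eqxx.
have := exchange k; have := exchange l; rewrite !inE !eqxx lk (negbTE kl) ?orbT /=.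
move=> /(_ isT) E10 /(_ isT) E01.
by case: x; case: y => //=; rewrite ?E10 ?E01.
Qed.

Lemma Q_blocks_merge_invariant j0 : k = lift l j0 -> forall p q,
  coarse (merge_map l j0) p =1 coarse (merge_map l j0) q -> Q (blocks A p) -> Q (blocks A q).
Proof.
move=> Ek p q Epq.
have merged r : Q (blocks A r) <-> Q (blocks A (set2 r (r k && r l) (r k && r l))).
  rewrite -Q_blocks_set2; apply: (eq_Q_blocks HQ) => j.
  by rewrite /set2; case: eqVneq => [-> | _] //; case: eqVneq => [-> | _].
have Ekl : p k && p l = q k && q l.
  by have := Epq (merge_map l j0 k); rewrite !coarse_merge_map -Ek !inE eqxx.
rewrite merged [Q (blocks A q)]merged Ekl.
suff E : set2 p (q k && q l) (q k && q l) =1 set2 q (q k && q l) (q k && q l).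
  by rewrite (eq_Q_blocks HQ E).
move=> j; rewrite /set2; case: eqVneq => [// | jk]; case: eqVneq => [// | jl].
by have := Epq (merge_map l j0 j); rewrite !coarse_merge_map -Ek !inE (negbTE jk) (negbTE jl).
Qed.

Lemma twins_merge_representation :
  exists (A' : 'I_n.-1 -> pset d) (s' : 'I_m -> 'I_n.-1 -> bool), represents A' s' Q.
Proof.
case: (unliftP l k) => [j0 Ek | Ekl]; last by move: kl; rewrite Ekl eqxx.
exists (coarsen A (merge_map l j0)), (fun i => coarse (merge_map l j0) (s i)).
exact: (represents_coarsen (merge_map_surj l j0)) HQ (Q_blocks_merge_invariant Ek).
Qed.

End Twins.

Section Formulas.
Variable d : nat.

(* Closed, unlike [FEq d 0 0]. *)
Definition FTrue : form d := FEx 0 (FEq d 0 0).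
Definition FOr (g h : form d) : form d := FNot (FAnd (FNot g) (FNot h)).
Definition FIff (g h : form d) : form d :=
  FAnd (FNot (FAnd g (FNot h))) (FNot (FAnd h (FNot g))).
Definition FAll (v : nat) (g : form d) : form d := FNot (FEx v (FNot g)).
Definition FAlls (vs : seq nat) (g : form d) : form d := foldr FAll g vs.
Definition FAnds (T : Type) (r : seq T) (F : T -> form d) : form d :=
  foldr (fun t g => FAnd (F t) g) FTrue r.
Definition FOrs (T : Type) (r : seq T) (F : T -> form d) : form d :=
  foldr (fun t g => FOr (F t) g) (FNot FTrue) r.
Definition FEqs (us ws : point d) : form d :=
  FAnds (enum 'I_d) (fun i => FEq d (us i) (ws i)).
Definition FAvoid r (zs us : point d) (cs : 'I_r -> point d) : form d :=
  FNot (FOr (FEqs zs us) (FOrs (enum 'I_r) (fun j => FEqs zs (cs j)))).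

Definition override (e f : nat -> nat) (vs : seq nat) : nat -> nat :=
  fun v => if v \in vs then f v else e v.

Lemma fv_FAnds (T : Type) (r : seq T) F v : fv (FAnds r F) v -> exists t, fv (F t) v.
Proof.
elim: r => [|t r IH] /=; first by rewrite orbb => /andP [/negbTE ->].
by case/orP => [Ht | /IH]; first by exists t.
Qed.

Lemma fv_FOrs (T : Type) (r : seq T) F v : fv (FOrs r F) v -> exists t, fv (F t) v.
Proof.
elim: r => [|t r IH] /=; first by rewrite orbb => /andP [/negbTE ->].
by case/orP => [Ht | /IH]; first by exists t.
Qed.

Lemma fv_FEqs us ws v : fv (FEqs us ws) v -> exists i, v = us i \/ v = ws i.
Proof. by case/fv_FAnds => i /orP [] /eqP ->; exists i; [left | right]. Qed.

Lemma fv_FAvoid r zs us (cs : 'I_r -> point d) v : fv (FAvoid zs us cs) v ->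
  exists i, [\/ v = zs i, v = us i | exists j, v = cs j i].
Proof.
case/orP => [/fv_FEqs [i [] ->] | /fv_FOrs [j /fv_FEqs [i [] ->]]]; exists i; try by constructor.
by apply: Or33; exists j.
Qed.

Lemma fv_FAlls vs g v : fv (FAlls vs g) v -> v \notin vs /\ fv g v.
Proof.
elim: vs => [|w vs IH] //= /andP [vw /IH [vs_v gv]].
by rewrite inE negb_or vw.
Qed.

Variable Q : quant d.

Lemma sat_FIff e g h : sat Q e (FIff g h) <-> (sat Q e g <-> sat Q e h).
Proof.
split=> [[H1 H2] | [H1 H2]]; last by split=> [[/H1 Hh /(_ Hh)] | [/H2 Hg /(_ Hg)]].
by split=> H; apply: contrapT => Hn; [apply: H1 | apply: H2].
Qed.

Lemma sat_FAll e v g : sat Q e (FAll v g) <-> forall a, sat Q (upd1 e v a) g.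
Proof. by rewrite /= -not_forallP. Qed.

Lemma sat_FAlls e vs g : sat Q e (FAlls vs g) <-> forall f, sat Q (override e f vs) g.
Proof.
elim: vs e => [|v vs IH] e.
  by split=> [H f | /(_ e)]; rewrite /override (_ : (fun _ => _) = e) //; apply: funext.
rewrite [FAlls _ _]/= sat_FAll; split=> [H f | H a].
  suff -> : override e f (v :: vs) = override (upd1 e v (f v)) f vs by apply: (IH _).1.
  by apply: funext => w; rewrite /override /upd1 inE; case: eqVneq => [-> | _]; case: ifP.
apply/IH => f; set f' := fun w => if w \in vs then f w else a.
suff -> : override (upd1 e v a) f vs = override e f' (v :: vs) by apply: H.
by apply: funext => w; rewrite /override /upd1 /f' inE; case: eqVneq => [-> | _]; case: ifP.
Qed.

Lemma sat_FNot e g : sat Q e (FNot g) <-> ~ sat Q e g.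
Proof. by []. Qed.

Lemma sat_FOr e g h : sat Q e (FOr g h) <-> sat Q e g \/ sat Q e h.
Proof. by rewrite /= -not_orP; split=> [/contrapT | H /(_ H)]. Qed.

Lemma sat_FAnds (T : eqType) (r : seq T) F e :
  sat Q e (FAnds r F) <-> forall t, t \in r -> sat Q e (F t).
Proof.
elim: r => [|t r IH] /=; first by split=> // _; exists 0.
rewrite IH; split=> [[Ht Hr] t' | H].
  by rewrite inE => /orP [/eqP -> // | /Hr].
by split=> [|t' Ht']; apply: H; rewrite inE ?eqxx ?Ht' ?orbT.
Qed.

Lemma sat_FOrs (T : eqType) (r : seq T) F e :
  sat Q e (FOrs r F) <-> exists2 t, t \in r & sat Q e (F t).
Proof.
elim: r => [|t r IH]; first by split=> [/(_ (ex_intro _ 0 erefl)) | []].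
rewrite [FOrs _ _]/= sat_FOr IH; split=> [[Ht | [t' Ht' H]] | [t' +]].
- by exists t; rewrite ?mem_head.
- by exists t'; rewrite // inE Ht' orbT.
- by rewrite inE => /orP [/eqP -> | Ht' H]; [left | right; exists t'].
Qed.

Lemma sat_FEqs e us ws : sat Q e (FEqs us ws) <-> forall i, e (us i) = e (ws i).
Proof. by rewrite sat_FAnds; split=> H i => [|_]; apply: H; rewrite ?mem_enum. Qed.

Lemma sat_FAvoid r e zs us (cs : 'I_r -> point d) :
  sat Q e (FAvoid zs us cs) <->
  ~ ((forall i, e (zs i) = e (us i)) \/ exists j, forall i, e (zs i) = e (cs j i)).
Proof.
rewrite /FAvoid sat_FNot sat_FOr sat_FEqs sat_FOrs.
split=> H1 H2; apply: H1; case: H2 => [H2 | H2]; try by left.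
- by case: H2 => j Hj; right; exists j; rewrite ?mem_enum //; apply/sat_FEqs.
- by case: H2 => j _ /sat_FEqs Hj; right; exists j.
Qed.

End Formulas.

Lemma upd_in d e (xs a : point d) i : tuple_inj xs -> upd e xs a (xs i) = a i.
Proof.
move=> /forallP inj; rewrite /upd; case: pickP => [j /eqP Eji | /(_ i)]; last by rewrite eqxx.
by have /forallP /(_ i) /implyP /(_ (introT eqP Eji)) /eqP -> := inj j.
Qed.

Lemma upd_out d e (xs a : point d) v : (forall i, xs i != v) -> upd e xs a v = e v.
Proof. by move=> H; rewrite /upd; case: pickP => // j; rewrite (negbTE (H j)). Qed.

(* Variable layout: x = slot 0, y = slot 1, the Q-bound tuple z = slot 2 and the
   parameter c_j = slot j.+3. *)
Definition slot {d : nat} (t : nat) : point d := fun i => t * d + i.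

Lemma slot_inj d t t' (i i' : 'I_d) : slot t i = slot t' i' -> t = t' /\ i = i'.
Proof.
rewrite /slot => E; have d_gt0 : 0 < d by apply: leq_ltn_trans (ltn_ord i).
have := congr1 (modn^~ d) E; rewrite /= !modnMDl !modn_small // => /val_inj Ei.
by move: E; rewrite Ei => /addIn /eqP; rewrite eqn_mul2r gtn_eqF // => /eqP.
Qed.

Lemma slot_tuple_inj d t : tuple_inj (@slot d t).
Proof. by apply/'forall_'forall_implyP => i j /eqP /slot_inj [_ ->]. Qed.

Lemma slot_neq d t t' (i i' : 'I_d) : t != t' -> slot t i != slot t' i'.
Proof. by move=> /eqP tt'; apply/eqP => /slot_inj []. Qed.

Section SameBlockFormula.
Variables (d n : nat).

Definition cvar (j : 'I_n) : point d := slot j.+3.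
Definition cvars : seq nat := [seq cvar p.1 p.2 | p <- enum {: 'I_n * 'I_d}].
Definition FQAvoid (us : point d) : form d := FQ (slot 2) (FAvoid (slot 2) us cvar).
Definition same_block_form : form d :=
  FAlls cvars (FIff (FQAvoid (slot 0)) (FQAvoid (slot 1))).

Lemma fv_same_block_form v :
  fv same_block_form v -> exists i : 'I_d, v = slot 0 i \/ v = slot 1 i.
Proof.
have fv_avoid t :
    fv (FQAvoid (slot t)) v -> v \notin cvars -> exists i : 'I_d, v = slot t i.
  move=> /andP [/fv_FAvoid [i [->|->|[j ->]]] not_bound] free.
  - by case/existsP: not_bound; exists i.
  - by exists i.
  - by case/mapP: free; exists (j, i); rewrite ?mem_enum.
case/fv_FAlls => free /orP [] /orP [] /fv_avoid => /(_ free) [i ->]; exists i; auto.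
Qed.

End SameBlockFormula.

Section SameBlockSemantics.
Variables (d n m : nat) (A : 'I_n -> pset d) (s : 'I_m -> 'I_n -> bool).
Variable Q : quant d.
Hypothesis HQ : represents A s Q.

Lemma sat_FQ_FAvoid r E zs us (cs : 'I_r -> point d) a c :
  tuple_inj zs -> (forall i i', zs i != us i') -> (forall j i i', zs i != cs j i') ->
  (forall i, E (us i) = a i) -> (forall j i, E (cs j i) = c j i) ->
  sat Q E (FQ zs (FAvoid zs us cs)) <-> Q (avoiding a c).
Proof.
move=> zs_inj zs_us zs_cs Eus Ecs.
suff Ew w : sat Q (upd E zs w) (FAvoid zs us cs) <-> avoiding a c w.
  by rewrite /= (eq_Q HQ Ew); split=> [[] | ].
have Ez i : upd E zs w (zs i) = w i by rewrite upd_in.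
have Eu i : upd E zs w (us i) = a i by rewrite upd_out.
have Ec j i : upd E zs w (cs j i) = c j i by rewrite upd_out.
rewrite sat_FAvoid; split=> H1 H2; apply: H1; case: H2 => [H2 | [j H2]].
- by left => i; rewrite Ez Eu H2.
- by right; exists j => i; rewrite Ez Ec H2.
- by left; apply: funext => i; rewrite -Ez H2 Eu.
- by right; exists j; apply: funext => i; rewrite -Ez H2 Ec.
Qed.

Lemma sat_same_block_form e a b :
  sat Q (upd (upd e (slot 0) a) (slot 1) b) (same_block_form d n) <->
  forall c : 'I_n -> point d, Q (avoiding a c) <-> Q (avoiding b c).
Proof.
set E := upd (upd e (slot 0) a) (slot 1) b; set vars := cvars d n.
pose c_of (f : nat -> nat) : 'I_n -> point d := fun j i => f (cvar j i).
have cs_vars (j : 'I_n) (i : 'I_d) : cvar j i \in vars.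
  by apply/mapP; exists (j, i); rewrite ?mem_enum.
have slot_vars t (i : 'I_d) : t < 3 -> (slot t i \in vars) = false.
  by move=> t_lt3; apply/mapP => -[[j i'] _ /slot_inj [Et _]]; move: t_lt3; rewrite Et.
have sat_body f :
    sat Q (override E f vars) (FIff (FQAvoid n (slot 0)) (FQAvoid n (slot 1))) <->
    (Q (avoiding a (c_of f)) <-> Q (avoiding b (c_of f))).
  have Ecs j i : override E f vars (cvar j i) = c_of f j i by rewrite /override cs_vars.
  have Ea i : override E f vars (slot 0 i) = a i.
    by rewrite /override slot_vars // /E upd_out ?upd_in ?slot_tuple_inj // => i'; apply: slot_neq.
  have Eb i : override E f vars (slot 1 i) = b i.
    by rewrite /override slot_vars // /E upd_in ?slot_tuple_inj.
  rewrite sat_FIff (sat_FQ_FAvoid _ _ _ Ea Ecs) ?(sat_FQ_FAvoid _ _ _ Eb Ecs) //;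
    by [apply: slot_tuple_inj | move=> *; apply: slot_neq].
rewrite sat_FAlls; split=> [H c | H f]; last exact/sat_body/H.
pose f v := if [pick p : 'I_n * 'I_d | cvar p.1 p.2 == v] is Some p then c p.1 p.2 else 0.
suff -> : c = c_of f by apply/sat_body/H.
apply: funext => j; apply: funext => i; rewrite /c_of /f.
by case: pickP => [[j' i'] /eqP /slot_inj [[/val_inj ->] ->] | /(_ (j, i))]; rewrite ?eqxx.
Qed.

End SameBlockSemantics.

Theorem lemma19 (d n m : nat) (A : 'I_n -> pset d) (s : 'I_m -> 'I_n -> bool)
    (Q : quant d) :
  presentation A s Q ->
  exists (chi : form d) (xs ys : point d),
    [/\ tuple_inj xs, tuple_inj ys,
        (forall i j, xs i <> ys j),
        (forall v, fv chi v -> exists i, v = xs i \/ v = ys i) &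
        forall (e : nat -> nat) (a b : point d),
          sat Q (upd (upd e xs a) ys b) chi <-> exists k, A k a /\ A k b].
Proof.
move=> [HQ minimal]; exists (same_block_form d n), (slot 0), (slot 1); split.
- exact: slot_tuple_inj.
- exact: slot_tuple_inj.
- by move=> i j; apply/eqP/slot_neq.
- exact: fv_same_block_form.
move=> e a b; rewrite (sat_same_block_form HQ); split; last first.
  by case=> k [Aa Ab] c; exact (Q_avoiding_same_block HQ c Aa Ab).
move=> twins; have [k Aa] := HQ.1.2.1 a; have [l Ab] := HQ.1.2.1 b.
have [kl | kl] := eqVneq k l; first by rewrite -kl in Ab; exists k.
have [A' [s' HQ']] := twins_merge_representation HQ kl Aa Ab twins.
by have := minimal _ _ _ _ HQ'; rewrite leqNgt ltn_predL (leq_ltn_trans (leq0n k) (ltn_ord k)).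
Qed.
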